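(* For $n\ge3$ and $k\ge4$, the number of cyclic permutations $\pi\in\mathfrak S_n$ whose one-line notation avoids $\delta_k=k(k-1)\cdots21$, such that every cyclic rotation of $C(\pi)$ avoids $1342$, and with $\pi_1=n-1$ and $\pi_n=1$, equals $b^\circ_{n-1,k-1}(1342)$, where $b^\circ_{m,j}(1342)$ denotes the number of cyclic permutations $\sigma\in\mathfrak S_m$ whose one-line notation avoids $\delta_j$, such that every cyclic rotation of $C(\sigma)$ avoids $1342$, and with $\sigma_1=m$.
   Context: A permutation $\pi\in\mathfrak S_n$ is cyclic if it consists of a single $n$-cycle. For cyclic $\pi$, $C(\pi)=(1,c_2,\dots,c_n)$ with $c_2=\pi(1)$, $c_{i+1}=\pi(c_i)$; its cyclic rotations are the sequences $c_ic_{i+1}\cdots c_nc_1\cdots c_{i-1}$ (with $c_1=1$). A sequence avoids a pattern $\sigma\in\mathfrak S_m$ if no subsequence of length $m$ is in the same relative order as $\sigma$. The one-line notation of $\pi$ is $\pi_1\cdots\pi_n$, $\pi_i=\pi(i)$. *)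

From mathcomp Require Import all_boot all_fingroup.
Set Implicit Arguments. Unset Strict Implicit. Unset Printing Implicit Defensive.

Definition oneline n (s : {perm 'I_n}) : seq nat :=
  [seq (s i : nat).+1 | i <- enum 'I_n].

Definition cyclicb n (s : {perm 'I_n}) : bool := #|porbits s| == 1.

(* C(pi) = (1, pi(1), pi(pi(1)), ..., ) of length n, in values 1..n. *)
Definition Cseq n (s : {perm 'I_n}) : seq nat :=
  traject (fun x => nth 0 (oneline s) x.-1) 1 n.

Definition same_order (t p : seq nat) : bool :=
  (size t == size p) &&
  all (fun i => all (fun j =>
         (nth 0 t i < nth 0 t j) == (nth 0 p i < nth 0 p j))
       (iota 0 (size t))) (iota 0 (size t)).

Definition contains (w p : seq nat) : bool :=
  [exists m : (size w).-tuple bool, same_order (mask m w) p].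

Definition avoids (w p : seq nat) : bool := ~~ contains w p.

Definition delta (k : nat) : seq nat := rev (iota 1 k).

Definition p1342 : seq nat := [:: 1; 3; 4; 2].

Definition rots_avoid n (s : {perm 'I_n}) (p : seq nat) : bool :=
  all (fun i => avoids (rot i (Cseq s)) p) (iota 0 n).

Definition bcirc (m j : nat) : nat :=
  #|[set s : {perm 'I_m} | [&& cyclicb s, avoids (oneline s) (delta j),
                              rots_avoid s p1342 & nth 0 (oneline s) 0 == m]]|.

(* Deleting the final entry 1 of pi and renaming its entry n to 1 is a
   bijection from the pi in S_n with pi_n = 1 onto S_(n-1); on cycles it just
   deletes n, so C(pi) = C(sigma) n.  It preserves cyclicity and the condition
   pi_1 = n-1 = sigma_1, which says that C(sigma) starts with 1 (n-1).
   In a rotation of C(pi), n can only play the role of 4 in an occurrence of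
   1342; as n is followed by 1 and then n-1 in the cycle, n-1 can take over that
   role, so the rotation conditions on pi and sigma agree.
   Finally pi contains delta_k iff sigma contains delta_(k-1).  Dropping the
   final 1 and replacing n by sigma_1 = n-1 maps a delta_k of pi to a
   delta_(k-1) of sigma.  Conversely, 1 precedes 2 in sigma: otherwise the
   rotation of C(sigma) starting at 2 contains 2, sigma^-1(1), n-1,
   sigma^-1(2), an occurrence of 1342.  So a decreasing subsequence of sigma
   ending with 1 may end with 2 instead, and the final 1 of pi extends it to a
   delta_k. *)

From mathcomp Require Import all_boot all_fingroup.
From mathcomp Require Import zify.
Set Implicit Arguments. Unset Strict Implicit. Unset Printing Implicit Defensive.

Lemma rot_rcons (T : Type) (s : seq T) x i :
  i <= size s -> rot i (rcons s x) = drop i s ++ x :: take i s.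
Proof.
move=> le_i; rewrite /rot -cats1 drop_cat take_cat.
case: ltnP => [_|ge_i]; first by rewrite -catA.
have /eqP -> : i == size s by rewrite eqn_leq le_i.
by rewrite subnn drop_size take_size cats0.
Qed.

Lemma rot_lt_size (T : Type) (s : seq T) i :
  0 < size s -> exists2 i', i' < size s & rot i s = rot i' s.
Proof.
move=> s_gt0; have [lt_i|ge_i] := ltnP i (size s); first by exists i.
by exists 0; rewrite // rot0 rot_oversize.
Qed.

Lemma subseq_skip (T : eqType) (t u v : seq T) x :
  x \notin t -> subseq t (u ++ x :: v) -> subseq t (u ++ v).
Proof.
move=> t_x sub_t; have : subseq t (filter (predC1 x) (u ++ x :: v)).
  by rewrite subseq_filter sub_t andbT; apply/allP => y yt /=; apply: contraNneq t_x => <-.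
by move/subseq_trans; apply; rewrite filter_cat /= eqxx -filter_cat filter_subseq.
Qed.

Lemma subseq_nth2 (T : eqType) x0 (s : seq T) a b :
  a < b < size s -> subseq [:: nth x0 s a; nth x0 s b] s.
Proof.
case/andP=> lt_ab lt_b; rewrite -[s in subseq _ s](cat_take_drop b) -cat1s.
rewrite cat_subseq // sub1seq; last by rewrite (drop_nth x0) ?mem_head.
by rewrite -(nth_take x0 lt_ab) mem_nth // size_takel // ltnW.
Qed.

Lemma subseq_rot_nth4 (T : eqType) x0 (s : seq T) i a b c d :
  i <= a < b -> b < size s -> c < d < i ->
  subseq [:: nth x0 s a; nth x0 s b; nth x0 s c; nth x0 s d] (rot i s).
Proof.
move=> /andP[le_ia lt_ab] lt_b /andP[lt_cd lt_di].
rewrite /rot -[[:: _; _; _; _]]/([:: _; _] ++ [:: _; _]) cat_subseq //.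
  have nth_dr k : i <= k -> nth x0 s k = nth x0 (drop i s) (k - i).
    by move=> le_ik; rewrite nth_drop subnKC.
  have le_ib : i <= b := leq_trans le_ia (ltnW lt_ab).
  rewrite (nth_dr a) // (nth_dr b) //.
  by apply: subseq_nth2; rewrite size_drop; lia.
rewrite -(nth_take x0 lt_di) -(nth_take x0 (ltn_trans lt_cd lt_di)).
by apply: subseq_nth2; rewrite size_takel; lia.
Qed.

Lemma containsP w p :
  reflect (exists2 t, subseq t w & same_order t p) (contains w p).
Proof.
apply: (iffP existsP) => [[m t_p]|[t /subseqP[m size_m ->] t_p]].
  by exists (mask m w); first exact: mask_subseq.
by exists (Tuple (introT eqP size_m)).
Qed.

Lemma same_order_1342 a b c d :
  same_order [:: a; b; c; d] p1342 = [&& a < d, d < b & b < c].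
Proof.
rewrite /same_order /= !ltnn !eqb_id !eqbF_neg !andbT /=.
apply/idP/idP; lia.
Qed.

Lemma nth_delta j i : i < j -> nth 0 (delta j) i = j - i.
Proof. by move=> lt_ij; rewrite nth_rev size_iota // nth_iota; lia. Qed.

Lemma same_order_delta t j :
  same_order t (delta j) = (size t == j) && pairwise gtn t.
Proof.
rewrite /same_order size_rev size_iota; case: eqP => [<- {j}|] //=.
apply/idP/(pairwiseP 0) => [ord_t i i' lt_i lt_i' lt_ii' | dec_t].
  move/allP/(_ i'): ord_t; rewrite mem_iota /= => /(_ lt_i')/allP/(_ i).
  rewrite mem_iota /= !nth_delta // => /(_ lt_i)/eqP ->.
  by move: lt_i lt_i'; rewrite !inE; lia.
apply/allP => i; rewrite mem_iota => lt_i; apply/allP => i'.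
rewrite mem_iota => lt_i'; rewrite !nth_delta //.
have [lt_ii'|lt_i'i|<-] := ltngtP i i'; last by rewrite !ltnn.
- by have /= := dec_t i i' lt_i lt_i' lt_ii' => gt_t; apply/eqP; lia.
- by have /= := dec_t i' i lt_i' lt_i lt_i'i => lt_t; apply/eqP; lia.
Qed.

Lemma contains1342P w :
  reflect (exists a b c d, [/\ subseq [:: a; b; c; d] w, a < d, d < b & b < c])
          (contains w p1342).
Proof.
apply: (iffP (containsP _ _)) => [[t sub_t]|[a [b [c [d [sub_t ? ? ?]]]]]].
  case: t sub_t => [|a [|b [|c [|d [|e t]]]]] sub_t //; rewrite ?same_order_1342.
  by case/and3P=> *; exists a, b, c, d.
by exists [:: a; b; c; d]; rewrite // same_order_1342; apply/and3P.
Qed.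

Lemma contains_deltaP w j :
  reflect (exists t, [/\ subseq t w, j <= size t & pairwise gtn t])
          (contains w (delta j)).
Proof.
apply: (iffP (containsP _ _)) => [[t sub_t]|[t [sub_t le_j dec_t]]].
  by rewrite same_order_delta => /andP[/eqP <- dec_t]; exists t.
exists (take j t); first exact: subseq_trans (take_subseq t j) sub_t.
by rewrite same_order_delta size_takel // eqxx (subseq_pairwise (take_subseq t j)).
Qed.

Lemma contains_delta_rcons w x j :
  contains (rcons w x) (delta j.+1) -> contains w (delta j).
Proof.
case/contains_deltaP => t [+ + dec_t]; case/lastP: t dec_t => // t y dec_t.
rewrite size_rcons ltnS -subseq_rev !rev_rcons /= => sub_t le_j.
apply/contains_deltaP; exists t; split=> //.
- by move: sub_t; case: eqP => _ sub_t; rewrite -subseq_rev // (cons_subseq sub_t).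
- exact: subseq_pairwise (subseq_rcons t y) dec_t.
Qed.

Definition relabel1 (N x : nat) : nat := if x == 1 then N else x.

Lemma relabel1_id N x : x != 1 -> relabel1 N x = x.
Proof. by rewrite /relabel1 => /negPf ->. Qed.

Lemma map_relabel1_id N s : 1 \notin s -> map (relabel1 N) s = s.
Proof.
by move=> s1; apply: map_id_in => x xs; apply: relabel1_id; apply: contraNneq s1 => <-.
Qed.

Section DecreasingSubsequences.

Variable o : seq nat.
Hypotheses (uniq_o : uniq o) (o_pos : {in o, forall x, 0 < x}).
Hypothesis o12 : subseq [:: 1; 2] o.

Lemma contains_delta_notin1 j :
  contains o (delta j) ->
  exists t, [/\ subseq t o, j <= size t, pairwise gtn t & 1 \notin t].
Proof.
case/contains_deltaP => t [sub_t le_j dec_t].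
have [t1|] := boolP (1 \in t); last by exists t.
case/splitPr: t1 sub_t le_j dec_t => t1 t2 sub_t le_j dec_t.
have t2_nil : t2 = [::].
  case: t2 sub_t le_j dec_t => // x t2 sub_t _.
  rewrite pairwise_cat /= => /and4P[_ _ /andP[x_lt1 _] _].
  have : x \in o by rewrite (mem_subseq sub_t) // mem_cat !inE eqxx !orbT.
  by move/o_pos; lia.
subst t2.
have o_1 : 1 \in o by rewrite (mem_subseq o12) ?inE ?eqxx.
move: uniq_o o12 sub_t; case/splitPr: o_1 => o1 o2 uniq_o12.
rewrite -[[:: 1; 2]]/([::] ++ 1 :: [:: 2]) !uniq_subseq_pivot // sub1seq.
move=> /andP[_ o2_2] /andP[t1_o1 _].
move: uniq_o12; rewrite cat_uniq /= negb_or => /and4P[_ /andP[o1_1 o12_disj] _ _].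
exists (rcons t1 2); split.
- by rewrite -cats1 cat_subseq //= sub1seq.
- by rewrite size_rcons; rewrite size_cat addn1 in le_j.
- rewrite pairwise_rcons (subseq_pairwise (prefix_subseq t1 [:: 1]) dec_t) andbT.
  apply/allP => x xt1; have xo1 := mem_subseq t1_o1 xt1.
  have x_gt1 : 1 < x by move: dec_t; rewrite pairwise_cat allrel1r => /andP[/allP/(_ x xt1)].
  have : x != 2 by apply: contraNneq o12_disj => x2; apply/hasP; exists 2; rewrite // -x2.
  by rewrite /gtn /=; lia.
- rewrite mem_rcons inE negb_or /=; apply: contra o1_1; exact: mem_subseq t1_o1 1.
Qed.

Lemma contains_delta_relabel1_rcons N j :
  contains o (delta j) ->
  contains (rcons (map (relabel1 N) o) 1) (delta j.+1).
Proof.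
case/contains_delta_notin1 => t [sub_t le_j dec_t t1].
apply/contains_deltaP; exists (rcons t 1); split.
- by rewrite -!cats1 cat_subseq // -(map_relabel1_id N t1) map_subseq.
- by rewrite size_rcons.
- rewrite pairwise_rcons dec_t andbT; apply/allP => x xt.
  have := o_pos (mem_subseq sub_t xt); have : x != 1 by apply: contraNneq t1 => <-.
  by rewrite /gtn /=; lia.
Qed.

End DecreasingSubsequences.

Lemma contains_delta_of_relabel1 M o j :
  uniq (M :: o) -> 1 < M -> {in o, forall x, x <= M} ->
  contains (map (relabel1 M.+1) (M :: o)) (delta j) -> contains (M :: o) (delta j).
Proof.
move=> uniq_Mo M_gt1 o_le /contains_deltaP[t [/subseqP[b _ ->]]].
rewrite -map_mask size_map.
move: (mask b _) (mask_subseq b (M :: o)) => u sub_u le_j dec_t.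
have uniq_u := subseq_uniq sub_u uniq_Mo.
apply/contains_deltaP; have [u_1|u_n1] := boolP (1 \in u); last first.
  by exists u; rewrite (map_relabel1_id _ u_n1) in dec_t.
case/splitPr: u_1 sub_u le_j dec_t uniq_u => u1 u2 sub_u le_j dec_t uniq_u.
have u1_nil : u1 = [::].
  case: u1 sub_u dec_t {le_j uniq_u} => // x u1 sub_u.
  rewrite map_cat pairwise_cat => /and3P[/allrelP/(_ (relabel1 M.+1 x) M.+1) + _ _].
  rewrite mem_head /= /relabel1 eqxx mem_head => /(_ isT isT).
  have : x \in M :: o by apply: (mem_subseq sub_u); rewrite mem_head.
  rewrite inE => /predU1P[->|/o_le]; case: eqP => _ /=; lia.
subst u1; move: uniq_u; rewrite cat0s cons_uniq => /andP[u2_n1 _].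
exists (M :: u2); split.
- by move: sub_u; rewrite /= (ltn_eqF M_gt1) eqxx => /cons_subseq.
- by [].
- move: dec_t; rewrite /= {1}/relabel1 eqxx (map_relabel1_id _ u2_n1) => /andP[u2_lt ->].
  rewrite andbT; apply/allP => x xu2.
  have xo : x \in o by move: sub_u; rewrite /= (ltn_eqF M_gt1) => /cons_subseq/mem_subseq->.
  have : x != M by apply: contraTneq xo => ->; move: uniq_Mo => /andP[].
  by have := allP u2_lt x xu2; rewrite /gtn /=; lia.
Qed.

Section RotationsWithNewMaximum.

Variables (M : nat) (rest : seq nat).
Let w := [:: 1, M & rest].
Hypothesis uniq_w : uniq w.
Hypothesis w_range : {in w, forall x, 0 < x <= M}.

Let w_top : M.+1 \notin w.
Proof. by apply/negP => /w_range; rewrite ltnn andbF. Qed.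

Let M_n1 : (M == 1) = false.
Proof. by move: uniq_w; rewrite /w /= inE eq_sym => /andP[/norP[/negPf]]. Qed.

Lemma rot_contains1342_of_top i a b d :
  i <= size w -> subseq [:: a; b; M.+1; d] (drop i w ++ M.+1 :: take i w) ->
  a < d -> d < b -> contains (rot i w) p1342.
Proof.
move=> le_i sub_t a_d d_b.
have uniq_r : uniq (drop i w ++ M.+1 :: take i w).
  by rewrite -rot_rcons // rot_uniq rcons_uniq w_top.
move: sub_t; rewrite -[[:: a; b; M.+1; d]]/([:: a; b] ++ M.+1 :: [:: d]).
rewrite uniq_subseq_pivot // sub1seq => /andP[ab_drop d_take].
have b_drop : b \in drop i w by rewrite (mem_subseq ab_drop) // !inE eqxx orbT.
have a_pos : 0 < a by case/andP: (w_range (mem_drop (mem_subseq ab_drop (mem_head a _)))).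
have b_le : b <= M by case/andP: (w_range (mem_drop b_drop)).
case: i {le_i uniq_r} d_take b_drop ab_drop => [|[|i]] //; first by rewrite inE => /eqP d1; lia.
rewrite /= !inE => /or3P[/eqP d1|/eqP dM|d_take] b_drop ab_drop; try lia.
have b_M : b != M.
  apply: contraTneq b_drop => ->; apply/negP => /mem_drop M_rest.
  by move: uniq_w; rewrite /w /= M_rest andbF.
apply/contains1342P; exists a, b, M, d; split; try lia.
by rewrite /rot /= -[[:: a; b; M; d]]/([:: a; b] ++ [:: M; d]) cat_subseq //= M_n1 eqxx sub1seq.
Qed.

Lemma rot_contains1342_rcons :
  (exists i, contains (rot i (rcons w M.+1)) p1342) <-> (exists i, contains (rot i w) p1342).
Proof.
split=> -[i].
  have [i' lt_i' ->] := rot_lt_size i (ltn0Sn (size w) : 0 < size (rcons w M.+1)).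
  rewrite size_rcons ltnS in lt_i'; rewrite rot_rcons //.
  case/contains1342P => a [b [c [d [sub_t a_d d_b b_c]]]].
  exists i'; have [c_top|c_ntop] := eqVneq c M.+1.
    by subst c; apply: rot_contains1342_of_top sub_t a_d d_b.
  have c_w : c \in w.
    have : c \in rot i' (rcons w M.+1).
      by rewrite rot_rcons // (mem_subseq sub_t) // !inE eqxx !orbT.
    by rewrite mem_rot mem_rcons inE (negPf c_ntop).
  have c_le : c <= M by case/andP: (w_range c_w).
  apply/contains1342P; exists a, b, c, d; split => //.
  by rewrite /rot; apply: subseq_skip sub_t; rewrite !inE; apply/negP; lia.
have [i' lt_i' ->] := rot_lt_size i (isT : 0 < size w).
case/containsP => t sub_t t_ord; exists i'; apply/containsP; exists t => //.
rewrite rot_rcons 1?ltnW //; apply: subseq_trans sub_t _.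
by rewrite /rot cat_subseq // subseq_cons.
Qed.

End RotationsWithNewMaximum.

Section OneLine.

Variables (n : nat) (s : {perm 'I_n}).

Lemma size_oneline : size (oneline s) = n.
Proof. by rewrite size_map size_enum_ord. Qed.

Lemma nth_oneline (i : 'I_n) : nth 0 (oneline s) i = (s i).+1.
Proof. by rewrite (nth_map i) ?size_enum_ord // nth_ord_enum. Qed.

Lemma uniq_oneline : uniq (oneline s).
Proof. by rewrite map_inj_uniq ?enum_uniq // => i j /succn_inj/val_inj/perm_inj. Qed.

Lemma oneline_range x : x \in oneline s -> 0 < x <= n.
Proof. by case/mapP => i _ ->; rewrite ltn_ord. Qed.

Lemma subseq_oneline (i j : 'I_n) : i < j -> subseq [:: (s i).+1; (s j).+1] (oneline s).
Proof. by move=> lt_ij; rewrite -!nth_oneline subseq_nth2 // lt_ij size_oneline /=. Qed.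

End OneLine.

Section Cyclic.

Variables (n : nat) (s : {perm 'I_n}).

Lemma cyclic_porbitE x : cyclicb s = (porbit s x == [set: 'I_n]).
Proof.
apply/cards1P/eqP => [[A porbitsA] | porbit_x].
  have orbitA y : porbit s y = A by apply/set1P; rewrite -porbitsA imset_f.
  by apply/setP => y; rewrite inE -eq_porbit_mem !orbitA eqxx.
exists (porbit s x); apply/setP => A; rewrite inE.
apply/imsetP/eqP => [[y _ ->]|->]; last by exists x.
by apply/eqP; rewrite eq_porbit_mem porbit_x inE.
Qed.

Lemma cyclic_card_porbit x : cyclicb s = (#|porbit s x| == n).
Proof.
rewrite (cyclic_porbitE x) eqEcard subsetT cardsT card_ord eqn_leq /=.
by rewrite -[n in #|_| <= n]card_ord max_card.
Qed.

Lemma cyclic_traject x : cyclicb s = uniq (traject s x n).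
Proof.
rewrite (cyclic_card_porbit x); apply/eqP/idP => [card_x|uniq_t].
  by have := uniq_traject_porbit s x; rewrite card_x.
have le_n : #|porbit s x| <= n by rewrite -[n in _ <= n]card_ord max_card.
apply/eqP; rewrite eqn_leq le_n -{1}(size_traject s x n) cardE uniq_leq_size // => y.
by case/trajectP => i _ ->; rewrite mem_enum -permX mem_porbit.
Qed.

Hypothesis s_cyclic : cyclicb s.

Lemma cyclic_iter x : iter n s x = x.
Proof.
move: s_cyclic; rewrite (cyclic_card_porbit x) => /eqP card_x.
by have := iter_porbit s x; rewrite card_x.
Qed.

Lemma cyclic_mem_traject x y : y \in traject s x n.
Proof.
move: s_cyclic; rewrite (cyclic_card_porbit x) => /eqP card_x.
have := porbit_traject s x y; rewrite card_x => <-.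
by move: s_cyclic; rewrite (cyclic_porbitE x) => /eqP->; rewrite inE.
Qed.

Lemma cyclic_iter_inj x i j : i < n -> j < n -> iter i s x = iter j s x -> i = j.
Proof.
move=> lt_i lt_j eq_ij; have uniq_t : uniq (traject s x n) by rewrite -cyclic_traject.
by apply/eqP; rewrite -(nth_uniq x _ _ uniq_t) ?size_traject // !nth_traject // eq_ij.
Qed.

End Cyclic.

Lemma Cseq_traject n (s : {perm 'I_n.+1}) :
  Cseq s = [seq (nat_of_ord x).+1 | x <- traject s ord0 n.+1].
Proof.
suff traj_f k (y : 'I_n.+1) :
    traject (fun x => nth 0 (oneline s) x.-1) y.+1 k
    = [seq (nat_of_ord x).+1 | x <- traject s y k].
  exact: (traj_f _ ord0).
by elim: k y => //= k IHk y; rewrite nth_oneline IHk.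
Qed.

Lemma nth_Cseq n (s : {perm 'I_n.+1}) i : i <= n -> nth 0 (Cseq s) i = (iter i s ord0).+1.
Proof. by move=> le_in; rewrite Cseq_traject (nth_map ord0) ?nth_traject ?size_traject. Qed.

Lemma Cseq_range n (s : {perm 'I_n.+1}) x : x \in Cseq s -> 0 < x <= n.+1.
Proof. by rewrite Cseq_traject => /mapP[y _ ->]; rewrite ltn_ord. Qed.

Lemma uniq_Cseq n (s : {perm 'I_n.+1}) : cyclicb s -> uniq (Cseq s).
Proof. by rewrite Cseq_traject map_inj_uniq -?cyclic_traject // => x y /succn_inj/ord_inj. Qed.

Lemma rots_avoidP n (s : {perm 'I_n.+1}) p :
  reflect (~ exists i, contains (rot i (Cseq s)) p) (rots_avoid s p).
Proof.
apply: (iffP allP) => [avoid_s [i]|no_rot i _]; last by apply/negP => c_i; apply: no_rot; exists i.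
have [|i' lt_i' ->] := rot_lt_size i (_ : 0 < size (Cseq s)); first by rewrite size_traject.
by apply/negP; apply: avoid_s; rewrite mem_iota; rewrite size_traject in lt_i'.
Qed.

(* Products of permutations act left to right: [extend_cycle s] acts as [s],
   except that the value 0 is redirected to the new point n, which goes to 0. *)
Definition extend_cycle n (s : {perm 'I_n}) : {perm 'I_n.+1} :=
  lift_perm ord_max ord_max s * tperm ord0 ord_max.

Section ExtendCycle.

Variables (n : nat) (s : {perm 'I_n}).
Local Notation p := (extend_cycle s).

Lemma extend_cycle_max : p ord_max = ord0.
Proof. by rewrite permM lift_perm_id tpermR. Qed.

Lemma extend_cycle_lift (x : 'I_n) :
  p (lift ord_max x) = if s x == 0 :> nat then ord_max else lift ord_max (s x).
Proof.
rewrite permM lift_perm_lift; case: eqP => [sx0|sx_n0].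
  by rewrite (_ : lift _ _ = ord0) ?tpermL //; apply: ord_inj; rewrite lift_max.
rewrite tpermD ?neq_lift // -(inj_eq (@ord_inj _)) lift_max eq_sym; exact/eqP.
Qed.

Lemma oneline_extend_cycle : oneline p = rcons (map (relabel1 n.+1) (oneline s)) 1.
Proof.
apply: (@eq_from_nth _ 0); first by rewrite size_rcons size_map !size_oneline.
rewrite size_oneline => i; rewrite ltnS leq_eqVlt => /predU1P[->|lt_in].
  by rewrite nth_rcons size_map size_oneline ltnn eqxx -[n]/(nat_of_ord (@ord_max n))
             nth_oneline extend_cycle_max.
rewrite nth_rcons size_map size_oneline lt_in.
rewrite -[i]/(nat_of_ord (Ordinal lt_in)) (nth_map 0) ?size_oneline // nth_oneline.
rewrite -(lift_max (Ordinal lt_in)) nth_oneline extend_cycle_lift /relabel1 eqSS.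
by case: eqP; rewrite ?lift_max.
Qed.

End ExtendCycle.

Lemma extend_cycle_inj n : injective (@extend_cycle n).
Proof.
move=> s1 s2 /mulIg eq_lift; apply/permP => x; apply: (@lift_inj _ ord_max).
by rewrite -!(lift_perm_lift ord_max) eq_lift.
Qed.

Lemma lift_perm_onto n (t : {perm 'I_n.+1}) :
  t ord_max = ord_max -> exists s, t = lift_perm ord_max ord_max s.
Proof.
move=> t_max; have t_lift x : ord_max != t (lift ord_max x).
  by rewrite -[X in X != _]t_max (inj_eq perm_inj) neq_lift.
pose f x := odflt x (unlift ord_max (t (lift ord_max x))).
have fK x : lift ord_max (f x) = t (lift ord_max x).
  by rewrite /f; case: (unlift_some (t_lift x)) => y -> ->.
have f_inj : injective f by move=> x y /(congr1 (lift ord_max)); rewrite !fK => /perm_inj/lift_inj.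
exists (perm f_inj); apply/permP => x; case: (unliftP ord_max x) => [y ->|->].
  by rewrite lift_perm_lift permE fK.
by rewrite lift_perm_id.
Qed.

Lemma extend_cycle_onto n (q : {perm 'I_n.+1}) :
  q ord_max = ord0 -> exists s, q = extend_cycle s.
Proof.
move=> q_max; have [|s eq_s] := @lift_perm_onto n (q * tperm ord0 ord_max).
  by rewrite permM q_max tpermL.
by exists s; rewrite /extend_cycle -eq_s -mulgA tperm2 mulg1.
Qed.

Section ExtendCyclic.

Variables (n : nat) (s : {perm 'I_n.+1}).
Local Notation p := (extend_cycle s).
Local Notation L := (lift (@ord_max n.+1)).

Lemma traject_extend_cycle_lift y k :
  ord0 \notin traject s (s y) k -> traject p (L y) k.+1 = map L (traject s y k.+1).
Proof.
elim: k y => // k IHk y; rewrite trajectS inE negb_or eq_sym => /andP[sy_n0 no0].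
by rewrite trajectS extend_cycle_lift ifN // (IHk _ no0).
Qed.

Lemma traject_extend_cycle_lift_max y k :
  ord_max \notin traject p (L y) k.+1 -> traject p (L y) k.+1 = map L (traject s y k.+1).
Proof.
elim: k y => // k IHk y; rewrite [traject p _ _]trajectS inE negb_or => /andP[_].
rewrite extend_cycle_lift; case: eqP => [_|_ no_max]; first by rewrite trajectS mem_head.
by rewrite (IHk _ no_max).
Qed.

Lemma lift_ord0 : L ord0 = ord0.
Proof. exact/ord_inj/lift_max. Qed.

Hypothesis s_cyclic : cyclicb s.

Lemma traject_extend_cycle : traject p ord0 n.+2 = rcons (map L (traject s ord0 n.+1)) ord_max.
Proof.
have /andP[no0 _] : (ord0 \notin traject s (s ord0) n) && uniq (traject s (s ord0) n).
  by rewrite -cons_uniq -trajectS -cyclic_traject.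
have traj_p : traject p ord0 n.+1 = map L (traject s ord0 n.+1).
  by rewrite -lift_ord0 (traject_extend_cycle_lift no0).
rewrite trajectSr traj_p iterS -(nth_traject _ (ltnSn n)) traj_p (nth_map ord0) ?size_traject //.
by rewrite nth_traject // extend_cycle_lift -iterS cyclic_iter.
Qed.

Lemma Cseq_extend_cycle : Cseq p = rcons (Cseq s) n.+2.
Proof.
rewrite !Cseq_traject traject_extend_cycle map_rcons -map_comp.
by congr rcons; apply: eq_map => x; rewrite [LHS]/comp lift_max.
Qed.

End ExtendCyclic.

Lemma cyclic_extend_cycle n (s : {perm 'I_n.+1}) : cyclicb (extend_cycle s) = cyclicb s.
Proof.
apply/idP/idP => [|s_cyclic].
  rewrite (cyclic_traject _ ord_max) (cyclic_traject _ ord0) trajectS extend_cycle_max.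
  rewrite cons_uniq -lift_ord0 => /andP[no_max].
  by rewrite (traject_extend_cycle_lift_max no_max) map_inj_uniq //; apply: lift_inj.
rewrite (cyclic_traject _ ord0) traject_extend_cycle // rcons_uniq.
rewrite (map_inj_uniq (@lift_inj _ ord_max)) -cyclic_traject s_cyclic andbT.
by apply/mapP => -[y _ /eqP]; rewrite (negPf (neq_lift _ _)).
Qed.

Section OneBeforeTwo.

Variables (m : nat) (s : {perm 'I_m.+1}).
Hypotheses (m_ge2 : 2 <= m) (s_cyclic : cyclicb s) (s0 : s ord0 = ord_max).
Hypothesis s_avoid : rots_avoid s p1342.

Local Notation it i := (iter i s ord0).

Let it_inj i j : i <= m -> j <= m -> it i = it j -> i = j.
Proof. exact: cyclic_iter_inj s_cyclic ord0 i j. Qed.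

Lemma one_before_two : subseq [:: 1; 2] (oneline s).
Proof.
have val1 : nat_of_ord (inord 1 : 'I_m.+1) = 1 by rewrite inordK //; lia.
have [j le_jm it_j] : exists2 j, j <= m & inord 1 = it j.
  by case/trajectP: (cyclic_mem_traject s_cyclic ord0 (inord 1)) => j; exists j.
have j_gt1 : 1 < j.
  by case: j it_j {le_jm} => [|[|//]] /(congr1 val) /=; rewrite val1 // s0 /=; lia.
set q := it j.-1; set l := it m.
have s_q : s q = inord 1 by rewrite it_j -iterS prednK // ltnW.
have s_l : s l = ord0 by rewrite -iterS cyclic_iter.
suff lt_lq : l < q by have := subseq_oneline s lt_lq; rewrite s_q s_l val1.
rewrite ltn_neqAle; apply/andP; split.
  by apply/eqP => /val_inj/it_inj eq_m; move: eq_m le_jm; lia.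
rewrite leqNgt; apply/negP => lt_ql.
have q_gt1 : 1 < q.
  have : q != ord0 by apply/eqP; rewrite -[ord0]/(it 0) => /it_inj; lia.
  have : q != inord 1 by apply/eqP; rewrite it_j => /it_inj; lia.
  by rewrite -!(inj_eq (@ord_inj _)) val1 /=; lia.
have lt_lm : l < m.
  have : l != it 1 by apply/eqP => /it_inj; lia.
  by rewrite /= s0 -val_eqE /= ltn_neqAle -ltnS ltn_ord andbT.
have j_gt2 : 2 < j.
  have : j.-1 != 1 by apply/eqP => j1; move: lt_ql lt_lm; rewrite /q j1 /= s0 /=; lia.
  lia.
have lt_jm : j < m.
  rewrite ltn_neqAle le_jm andbT; apply/eqP => eq_jm.
  by rewrite eq_jm in it_j; move: lt_ql; rewrite /l -it_j val1; lia.
move/rots_avoidP: s_avoid; apply; exists j; apply/contains1342P.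
exists 2, l.+1, m.+1, q.+1; split; try lia.
have := @subseq_rot_nth4 _ 0 (Cseq s) j j m 1 j.-1.
rewrite !nth_Cseq ?leqnn ?size_traject //; try lia.
by rewrite -it_j val1 /= s0; apply; lia.
Qed.

End OneBeforeTwo.

Section ExtendCycleConditions.

Variables (m : nat) (s : {perm 'I_m.+1}).
Hypothesis m_gt0 : 0 < m.
Local Notation p := (extend_cycle s).

Lemma extend_cycle_first :
  (nth 0 (oneline p) 0 == m.+1) = (nth 0 (oneline s) 0 == m.+1).
Proof.
rewrite oneline_extend_cycle nth_rcons size_map size_oneline /=.
rewrite (nth_map 0) ?size_oneline // /relabel1; case: ifP => [/eqP->|//].
by apply/eqP/eqP; lia.
Qed.

Lemma extend_cycle_last : nth 0 (oneline p) m.+1 = 1.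
Proof. by rewrite oneline_extend_cycle nth_rcons size_map size_oneline ltnn eqxx. Qed.

Hypothesis s_cyclic : cyclicb s.
Hypothesis s_first : nth 0 (oneline s) 0 = m.+1.

Lemma rots_avoid_extend_cycle : rots_avoid p p1342 = rots_avoid s p1342.
Proof.
have [rest Cseq_s] : exists rest, Cseq s = [:: 1, m.+1 & rest].
  have size_C : size (Cseq s) = m.+1 by apply: size_traject.
  have := nth_Cseq s m_gt0; rewrite [iter 1 _ _]/= -(nth_oneline s ord0) s_first.
  have := nth_Cseq s (leq0n m).
  by case: (Cseq s) size_C => [|a [|b rest]] //= _ -> ->; exists rest.
have := uniq_Cseq s_cyclic; have := @Cseq_range _ s; rewrite Cseq_s => range_C uniq_C.
have iff_rot := rot_contains1342_rcons uniq_C range_C.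
apply/rots_avoidP/rots_avoidP; rewrite Cseq_extend_cycle // Cseq_s => no_rot c_rot.
  by apply: no_rot; apply/iff_rot.
by apply: no_rot; apply/iff_rot.
Qed.

Lemma delta_extend_cycle k : 3 <= k -> rots_avoid s p1342 ->
  contains (oneline p) (delta k.+1) = contains (oneline s) (delta k).
Proof.
move=> k_ge3 s_avoid; rewrite oneline_extend_cycle; apply/idP/idP.
  have [o oneline_s] : exists o, oneline s = m.+1 :: o.
    by case: (oneline s) s_first => // a o /= ->; exists o.
  move/contains_delta_rcons; rewrite oneline_s; apply: contains_delta_of_relabel1.
  - by rewrite -oneline_s uniq_oneline.
  - by rewrite ltnS.
  - move=> x xo; have : x \in oneline s by rewrite oneline_s inE xo orbT.
    by case/oneline_range/andP.
move=> c_s; have m_ge2 : 2 <= m.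
  case/contains_deltaP: c_s => t [sub_t le_k _].
  by have := size_subseq sub_t; rewrite size_oneline; lia.
have s0 : s ord0 = ord_max.
  by apply: ord_inj; apply: succn_inj; rewrite -nth_oneline s_first.
apply: contains_delta_relabel1_rcons c_s; first exact: uniq_oneline.
  by move=> x /oneline_range/andP[].
exact: one_before_two.
Qed.

End ExtendCycleConditions.

Lemma extend_cycle_conditions m k (s : {perm 'I_m.+1}) : 0 < m -> 3 <= k ->
  [&& cyclicb (extend_cycle s), avoids (oneline (extend_cycle s)) (delta k.+1),
      rots_avoid (extend_cycle s) p1342, nth 0 (oneline (extend_cycle s)) 0 == m.+1
    & nth 0 (oneline (extend_cycle s)) m.+1 == 1]
  = [&& cyclicb s, avoids (oneline s) (delta k), rots_avoid s p1342
    & nth 0 (oneline s) 0 == m.+1].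
Proof.
move=> m_gt0 k_ge3; rewrite extend_cycle_last eqxx andbT extend_cycle_first //.
rewrite cyclic_extend_cycle; case s_cyclic: (cyclicb s) => //=.
have [/eqP s_first|] := boolP (nth 0 (oneline s) 0 == m.+1); last by rewrite !andbF.
rewrite rots_avoid_extend_cycle //; case s_avoid: (rots_avoid s p1342); last by rewrite !andbF.
by rewrite /avoids delta_extend_cycle.
Qed.

Theorem lemma3p5 (n k : nat) : 3 <= n -> 4 <= k ->
  #|[set s : {perm 'I_n} | [&& cyclicb s, avoids (oneline s) (delta k),
                               rots_avoid s p1342,
                               nth 0 (oneline s) 0 == n.-1
                             & nth 0 (oneline s) n.-1 == 1]]|
  = bcirc n.-1 k.-1.
Proof.
case: n => [|[|m]] //; rewrite !ltnS => m_gt0; case: k => [|k] //; rewrite ltnS => k_ge3.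
rewrite /bcirc /= -(card_imset _ (@extend_cycle_inj m.+1)).
apply: eq_card => q; rewrite inE.
apply/idP/imsetP => [q_cond|[s s_cond ->]]; last first.
  by rewrite inE in s_cond; rewrite extend_cycle_conditions.
have q_max : q ord_max = ord0.
  apply: ord_inj; apply: succn_inj; rewrite -nth_oneline.
  by case/and5P: q_cond => _ _ _ _ /eqP.
have [s eq_q] := extend_cycle_onto q_max.
by exists s; rewrite // inE -extend_cycle_conditions // -eq_q.
Qed.
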